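(* Let $M$ and $M'$ be matroids on the same finite ground set $S$, both of rank $r$, such that the circuits of $M$ of cardinality at most $r$ are exactly the circuits of $M'$ of cardinality at most $r$. Then $M=M'$. *)

From mathcomp Require Import all_boot.
Set Implicit Arguments. Unset Strict Implicit. Unset Printing Implicit Defensive.

Record matroid (T : finType) := Matroid {
  indep : {set T} -> bool;
  indep0 : indep set0;
  indep_sub : forall A B : {set T}, B \subset A -> indep A -> indep B;
  indep_exchange : forall A B : {set T}, indep A -> indep B -> #|A| < #|B| ->
      exists2 x, x \in B :\: A & indep (x |: A)
}.

Definition mrank (T : finType) (M : matroid T) : nat :=
  \max_(A : {set T} | indep M A) #|A|.

Definition circuit (T : finType) (M : matroid T) (C : {set T}) : Prop :=
  ~~ indep M C /\ (forall D : {set T}, D \proper C -> indep M D).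

From mathcomp Require Import all_boot.
From Stdlib Require Import FunctionalExtensionality ProofIrrelevance.
Set Implicit Arguments. Unset Strict Implicit. Unset Printing Implicit Defensive.

(* A set that is independent in M' but dependent in M contains a circuit of M
   of size at most rank M' = r; that circuit is then a circuit of M', which
   cannot lie in an M'-independent set.  By symmetry M and M' have the same
   independent sets. *)

Section MatroidFacts.

Variables (T : finType) (M : matroid T).

Lemma indep_card_le_mrank (A : {set T}) : indep M A -> #|A| <= mrank M.
Proof. exact: (@leq_bigmax_cond _ (indep M) (fun B : {set T} => #|B|) A). Qed.

Lemma circuit_indep_sub (C A : {set T}) :
  circuit M C -> C \subset A -> ~~ indep M A.
Proof. by move=> [depC _] sCA; apply: contra depC; apply: indep_sub. Qed.

Lemma dep_sub_circuit (A : {set T}) :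
  ~~ indep M A -> exists2 C : {set T}, C \subset A & circuit M C.
Proof.
move=> depA.
have [C minC sCA] := @minset_exists T (fun X => ~~ indep M X) A depA.
exists C => //; split; first exact: minsetp minC.
move=> D ltDC; apply: contraT => depD.
by have eqDC := minsetinf minC depD (proper_sub ltDC); rewrite eqDC properxx in ltDC.
Qed.

End MatroidFacts.

Lemma indep_of_small_circuits (T : finType) (M M' : matroid T) :
  (forall C : {set T}, #|C| <= mrank M' -> circuit M C -> circuit M' C) ->
  forall A : {set T}, indep M' A -> indep M A.
Proof.
move=> circuitMM' A indA; apply: contraT => depA.
have [C sCA circC] := dep_sub_circuit depA.
have leCr : #|C| <= mrank M' := leq_trans (subset_leq_card sCA) (indep_card_le_mrank indA).
by have := circuit_indep_sub (circuitMM' C leCr circC) sCA; rewrite indA.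
Qed.

Lemma matroid_eq (T : finType) (M M' : matroid T) : indep M =1 indep M' -> M = M'.
Proof.
case: M M' => i i0 isub iex [i' i0' isub' iex'] /= /functional_extensionality eqii'.
subst i'; congr Matroid; exact: proof_irrelevance.
Qed.

Theorem proposition2p2 (T : finType) (M M' : matroid T) (r : nat) :
  mrank M = r -> mrank M' = r ->
  (forall C : {set T}, #|C| <= r -> (circuit M C <-> circuit M' C)) ->
  M = M'.
Proof.
move=> rkM rkM' eq_circuits; apply: matroid_eq => A; apply/idP/idP.
- apply: indep_of_small_circuits => C; rewrite rkM => leCr.
  by case: (eq_circuits C leCr).
- apply: indep_of_small_circuits => C; rewrite rkM' => leCr.
  by case: (eq_circuits C leCr).
Qed.
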